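(* Let $\mathcal{X}$ be a feature space and $\mathcal{Y}=\{+1,-1\}$. Let $p(\boldsymbol{x},y)$ be a joint density on $\mathcal{X}\times\mathcal{Y}$ with class priors $\pi_+=p(y=+1)$, $\pi_-=p(y=-1)=1-\pi_+$ and class-conditional densities $p_+(\boldsymbol{x})=p(\boldsymbol{x}\mid y=+1)$, $p_-(\boldsymbol{x})=p(\boldsymbol{x}\mid y=-1)$. Suppose pairwise comparison data are generated as follows: two labeled examples $(\boldsymbol{x},y)$ and $(\boldsymbol{x}',y')$ are drawn independently from $p(\boldsymbol{x},y)$, and the unlabeled pair $(\boldsymbol{x},\boldsymbol{x}')$ is collected as a pairwise comparison if and only if $(y,y')\in\{(+1,+1),(+1,-1),(-1,-1)\}$; the dataset $\widetilde{\mathcal{D}}=\{(\boldsymbol{x}_i,\boldsymbol{x}_i')\}_{i=1}^n$ consists of $n$ independently collected such pairs. Let $$q(\boldsymbol{x},\boldsymbol{x}')=\pi_+^2p_+(\boldsymbol{x})p_+(\boldsymbol{x}')+\pi_-^2p_-(\boldsymbol{x})p_-(\boldsymbol{x}')+\pi_+\pi_-p_+(\boldsymbol{x})p_-(\boldsymbol{x}'),\qquad \widetilde{p}(\boldsymbol{x},\boldsymbol{x}')=\frac{q(\boldsymbol{x},\boldsymbol{x}')}{\pi_+^2+\pi_-^2+\pi_+\pi_-}.$$ Then the collected pairs are independently drawn from $\widetilde{p}(\boldsymbol{x},\boldsymbol{x}')$, i.e. $\widetilde{\mathcal{D}}\stackrel{\mathrm{i.i.d.}}{\sim}\widetilde{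p}(\boldsymbol{x},\boldsymbol{x}')$.
   Context: The true labels $y,y'$ are never observed by the learner; only the pair $(\boldsymbol{x},\boldsymbol{x}')$ is recorded. The density of a collected pair is the conditional density of $(\boldsymbol{x},\boldsymbol{x}')$ given the event $(y,y')\in\{(+1,+1),(+1,-1),(-1,-1)\}$. *)

From HB Require Import structures.
From mathcomp Require Import all_boot all_order all_algebra.
From mathcomp Require Import all_classical all_reals all_analysis.
Set Implicit Arguments. Unset Strict Implicit. Unset Printing Implicit Defensive.
Import Order.TTheory GRing.Theory Num.Theory.
Local Open Scope classical_set_scope.
Local Open Scope ring_scope.

(* Labels Y = {+1,-1} are encoded as bool: true = +1, false = -1. *)

(* P (a probability on X * Y) has joint density p(x,y) = pi_y p_y(x) w.r.t.
   mu (x) counting measure on Y, i.e. class prior pi_+ = pip, pi_- = 1 - pip,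
   class-conditional densities pp = p_+ and pn = p_-. *)
Definition has_joint_density d (X : measurableType d) (R : realType)
  (mu : {measure set X -> \bar R}) (pip : R) (pp pn : X -> R)
  (P : set (X * bool) -> \bar R) : Prop :=
  forall B : set (X * bool), measurable B ->
    P B = (pip%:E * \int[mu]_(x in [set x | B (x, true)]) (pp x)%:E
           + (1 - pip)%:E * \int[mu]_(x in [set x | B (x, false)]) (pn x)%:E)%E.

Definition is_density d (X : measurableType d) (R : realType)
  (mu : {measure set X -> \bar R}) (f : X -> R) : Prop :=
  measurable_fun setT f /\ (forall x, 0 <= f x) /\
  (\int[mu]_x (f x)%:E = 1)%E.

Definition collected {X : Type} : set ((X * bool) * (X * bool)) :=
  [set z | (z.1.2, z.2.2) \in [:: (true, true); (true, false); (false, false)]].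

Definition unlabel {X : Type} (z : (X * bool) * (X * bool)) : X * X :=
  (z.1.1, z.2.1).

Definition cond_prob {T : Type} (R : realType) (Q : set T -> \bar R)
  (B E : set T) : R :=
  fine (Q (B `&` E)) / fine (Q E).

Definition q_pair {X : Type} (R : realType) (pip : R) (pp pn : X -> R)
  (z : X * X) : R :=
  let pin := 1 - pip in
  pip ^+ 2 * pp z.1 * pp z.2 + pin ^+ 2 * pn z.1 * pn z.2
  + pip * pin * pp z.1 * pn z.2.

Definition ptilde {X : Type} (R : realType) (pip : R) (pp pn : X -> R)
  (z : X * X) : R :=
  let pin := 1 - pip in
  q_pair pip pp pn z / (pip ^+ 2 + pin ^+ 2 + pip * pin).

(* [P] has density (x, y) |-> pi_y p_y(x) with respect to [mu]
   times counting measure on the labels, so, by the Radon-Nikodym theorem, every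
   nonnegative integral against [P] splits into two [mu]-integrals.  For a
   measurable [A], the section at (x, y) of the event "collected with (x, x') in
   A" has [P]-mass pi_+ int_{A_x} p_+ + pi_- int_{A_x} p_- if y = +1 and
   pi_- int_{A_x} p_- if y = -1; integrating these against pi_y p_y(x) dx gives
   int_A q by Tonelli.  The collected event is the complement of the label pair
   (-1, +1), so its probability is 1 - pi_- pi_+ = pi_+^2 + pi_-^2 + pi_+ pi_-,
   the normalising constant of ptilde. *)

From HB Require Import structures.
From mathcomp Require Import all_boot all_order all_algebra.
From mathcomp Require Import all_classical all_reals all_analysis.
From mathcomp Require Import measurable_realfun ring lra.
Import Order.TTheory GRing.Theory Num.Theory.
Set Implicit Arguments. Unset Strict Implicit. Unset Printing Implicit Defensive.
Local Open Scope classical_set_scope.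
Local Open Scope ring_scope.

Definition sigma_finite_measure_of d (T : measurableType d) (R : realType)
    (mu : {measure set T -> \bar R}) (mu_sfin : sigma_finite setT mu) :
    {sigma_finite_measure set T -> \bar R} :=
  HB.pack (mu : set T -> \bar R) mu
    (isSFinite.Build _ _ _ (mu : set T -> \bar R) (sfinite_measure_sigma_finite mu_sfin))
    (isSigmaFinite.Build _ _ _ (mu : set T -> \bar R) mu_sfin).

Section integral_density.
Local Open Scope ereal_scope.
Context d (T : measurableType d) (R : realType).
Variables (nu : {finite_measure set T -> \bar R})
  (mu : {sigma_finite_measure set T -> \bar R}) (g : T -> R).
Hypotheses (mg : measurable_fun setT g)
  (nuE : forall A, measurable A -> nu A = \int[mu]_(x in A) (g x)%:E).

Lemma ge0_integral_density (f : T -> \bar R) :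
  (forall x, 0 <= f x) -> measurable_fun setT f ->
  \int[nu]_x f x = \int[mu]_x (f x * (g x)%:E).
Proof.
move=> f0 mf.
have mgE : measurable_fun setT (EFin \o g) by exact/measurable_EFinP.
have numu : nu `<< mu.
  apply/null_content_dominatesP => A mA muA0.
  by rewrite nuE// null_set_integral//; exact: measurable_funTS.
have rn_int := Radon_Nikodym_SigmaFinite.f_integrable numu.
rewrite -(Radon_Nikodym_SigmaFinite.change_of_variables numu)//.
apply: ae_eq_integral => //.
- by apply: emeasurable_funM => //; exact: measurable_int rn_int.
- exact: emeasurable_funM.
(* The Radon-Nikodym derivative of nu and g have the same integral on every measurable set. *)
apply/ae_eqe_mul2l/integral_ae_eq => //.
by move=> E _ mE; rewrite -Radon_Nikodym_SigmaFinite.f_integral// nuE.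
Qed.

End integral_density.

Section fubini_tonelli_in.
Local Open Scope ereal_scope.
Context d1 d2 (T1 : measurableType d1) (T2 : measurableType d2) (R : realType).
Variables (m1 : {sigma_finite_measure set T1 -> \bar R})
  (m2 : {sigma_finite_measure set T2 -> \bar R}) (f : T1 * T2 -> \bar R).
Hypotheses (mf : measurable_fun setT f) (f0 : forall z, 0 <= f z).

Lemma fubini_tonelli1_in (A : set (T1 * T2)) : measurable A ->
  \int[m1 \x m2]_(z in A) f z = \int[m1]_x \int[m2]_(y in xsection A x) f (x, y).
Proof.
move=> mA; rewrite integral_mkcond fubini_tonelli1//; last 2 first.
- exact/(measurable_restrictT _ mA)/measurable_funTS.
- by move=> z; rewrite /patch; case: ifP.
apply: eq_integral => x _; rewrite [RHS]integral_mkcond.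
by apply: eq_integral => y _; rewrite /patch mem_xsection.
Qed.

End fubini_tonelli_in.

Lemma collectedE (X : Type) :
  @collected X = ~` (([set: X] `*` [set false]) `*` ([set: X] `*` [set true])).
Proof.
apply/seteqP; split => -[[x [|]] [x' [|]]]; rewrite /collected /= !inE ?xpair_eqE /=.
all: by intuition.
Qed.

Lemma measurable_collected d (X : measurableType d) : measurable (@collected X).
Proof. by rewrite collectedE; apply: measurableC; apply: measurableX; apply: measurableX. Qed.

Lemma measurable_unlabel d (X : measurableType d) : measurable_fun setT (@unlabel X).
Proof.
apply: measurable_fun_pair.
- exact: measurableT_comp measurable_fst measurable_fst.
- exact: measurableT_comp measurable_fst measurable_snd.
Qed.

Lemma measurable_unlabel_collected d (X : measurableType d) (A : set (X * X)) :
  measurable A -> measurable (unlabel @^-1` A `&` collected).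
Proof.
move=> mA; apply: measurableI; last exact: measurable_collected.
by rewrite -[X in measurable X]setTI; exact: measurable_unlabel.
Qed.

Lemma q_pair_ge0 (X : Type) (R : realType) (pip : R) (pp pn : X -> R) z :
  0 <= pip -> pip <= 1 -> (forall x, 0 <= pp x) -> (forall x, 0 <= pn x) ->
  0 <= q_pair pip pp pn z.
Proof.
move=> pip_ge0 pip_le1 pp0 pn0.
have pin_ge0 : 0 <= 1 - pip by rewrite subr_ge0.
by rewrite /q_pair !addr_ge0// !mulr_ge0// sqr_ge0.
Qed.

Lemma measurable_q_pair d (X : measurableType d) (R : realType) (pip : R) (pp pn : X -> R) :
  measurable_fun setT pp -> measurable_fun setT pn ->
  measurable_fun setT (q_pair pip pp pn).
Proof.
move=> mpp mpn.
have m1 (f : X -> R) : measurable_fun setT f -> measurable_fun setT (fun z : X * X => f z.1).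
  by move=> mf; exact: measurableT_comp mf measurable_fst.
have m2 (f : X -> R) : measurable_fun setT f -> measurable_fun setT (fun z : X * X => f z.2).
  by move=> mf; exact: measurableT_comp mf measurable_snd.
rewrite /q_pair; apply: measurable_funD; first apply: measurable_funD.
all: apply: measurable_funM; last exact: m2.
all: by apply: measurable_funM; [exact: measurable_cst|exact: m1].
Qed.

Section pairwise_comparison.
Local Open Scope ereal_scope.
Context d (X : measurableType d) (R : realType) (mu : {measure set X -> \bar R}).
Variables (pip : R) (pp pn : X -> R) (P : probability (X * bool)%type R).
Hypotheses (mu_sfin : sigma_finite setT mu) (pip_ge0 : (0 <= pip)%R) (pip_le1 : (pip <= 1)%R)
  (pp_dens : is_density mu pp) (pn_dens : is_density mu pn)
  (P_dens : has_joint_density mu pip pp pn P).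

Let label_density (z : X * bool) : R :=
  if z.2 then (pip * pp z.1)%R else ((1 - pip) * pn z.1)%R.

Let measurable_label_density : measurable_fun setT label_density.
Proof.
have [[mpp _] [mpn _]] := (pp_dens, pn_dens).
by apply: (@measurable_fun_if_pair _ _ _ _ (fun x => pip * pp x)%R
  (fun x => (1 - pip) * pn x)%R); apply: measurable_funM.
Qed.

Let label_density_ge0 z : (0 <= label_density z)%R.
Proof.
have [[_ [pp0 _]] [_ [pn0 _]]] := (pp_dens, pn_dens).
by rewrite /label_density; case: ifP => _; rewrite mulr_ge0// subr_ge0.
Qed.

Let mu_at (b : bool) : {measure set (X * bool) -> \bar R}.
Proof. refine (pushforward mu (pair^~ b)); exact: pair2_measurable. Defined.

Let labelled_mu := measure_add (mu_at true) (mu_at false).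

Let integral_labelled_mu (f : X * bool -> \bar R) (D : set (X * bool)) :
  measurable D -> (forall z, 0 <= f z) -> measurable_fun setT f ->
  \int[labelled_mu]_(z in D) f z = \int[mu]_(x in [set x | D (x, true)]) f (x, true)
                                 + \int[mu]_(x in [set x | D (x, false)]) f (x, false).
Proof.
move=> mD f0 mf.
have mfD := measurable_funTS (D := D) mf.
have muE b : \int[mu_at b]_(z in D) f z = \int[mu]_(x in [set x | D (x, b)]) f (x, b).
  exact: (ge0_integral_pushforward (pair2_measurable b) mu mD mfD (fun z _ => f0 z)).
by rewrite ge0_integral_measure_add// !muE.
Qed.

Let sigma_finite_labelled_mu : sigma_finite setT labelled_mu.
Proof.
have [F UF Ffin] := mu_sfin.
exists (fun n => F n `*` setT); first by rewrite -setXTT UF setX_bigcupl.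
move=> n; have [mF muF] := Ffin n; split; first exact: measurableX.
have mu_atE b : mu_at b (F n `*` setT) = mu (F n).
  by rewrite /= /pushforward; congr (mu _); apply/seteqP; split=> x //= [].
by rewrite /labelled_mu measure_addE !mu_atE lte_add_pinfty.
Qed.

Let P_labelled_density A : measurable A ->
  P A = \int[labelled_mu]_(z in A) (label_density z)%:E.
Proof.
move=> mA; have [[mpp [pp0 _]] [mpn [pn0 _]]] := (pp_dens, pn_dens).
have mpair b : measurable [set x | A (x, b)].
  by rewrite -[X in measurable X]setTI; exact: pair2_measurable.
rewrite P_dens// integral_labelled_mu//; last exact/measurable_EFinP.
rewrite /label_density /= -!ge0_integralZl_EFin ?subr_ge0//.
- by move=> x _; rewrite lee_fin.
- exact/measurable_funTS/measurable_EFinP.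
- by move=> x _; rewrite lee_fin.
- exact/measurable_funTS/measurable_EFinP.
Qed.

Lemma integral_joint_density (f : X * bool -> \bar R) :
  (forall z, 0 <= f z) -> measurable_fun setT f ->
  \int[P]_z f z = \int[mu]_x (f (x, true) * (pip * pp x)%:E)
                + \int[mu]_x (f (x, false) * ((1 - pip) * pn x)%:E).
Proof.
move=> f0 mf.
rewrite (ge0_integral_density (mu := sigma_finite_measure_of sigma_finite_labelled_mu)
  measurable_label_density P_labelled_density)// integral_labelled_mu//.
- by move=> z; rewrite mule_ge0// lee_fin.
- by apply: emeasurable_funM => //; exact/measurable_EFinP.
Qed.

Let pin_ge0 : (0 <= 1 - pip)%R. Proof. by rewrite subr_ge0. Qed.

Let xsection_integral (f : X -> R) (A : set (X * X)) x :=
  \int[mu]_(y in xsection A x) (f y)%:E.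

Let xsection_integral_fin_num f A x : is_density mu f -> measurable A ->
  xsection_integral f A x \is a fin_num.
Proof.
move=> [mf [f0 f1]] mA.
rewrite ge0_fin_numE; last by apply: integral_ge0 => y _; rewrite lee_fin.
apply: (le_lt_trans _ (ltry 1%R)); rewrite -f1.
apply: ge0_subset_integral => //; first exact: measurable_xsection.
- exact/measurable_EFinP.
- by move=> y _; rewrite lee_fin.
Qed.

Let collected_in (A : set (X * X)) := unlabel @^-1` A `&` collected.

Let xsection_collected_in A x b b' :
  [set y | xsection (collected_in A) (x, b) (y, b')] =
  if b' ==> b then xsection A x else set0.
Proof.
apply/seteqP; split => y; rewrite /xsection /collected_in /collected /unlabel /= !inE.
all: by case: b; case: b' => /=; rewrite ?inE /=; intuition.
Qed.

Let P_xsection_collected_in A x b : measurable A ->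
  P (xsection (collected_in A) (x, b)) =
  (if b then pip%:E * xsection_integral pp A x else 0)
  + (1 - pip)%:E * xsection_integral pn A x.
Proof.
move=> mA; rewrite P_dens; last first.
  by apply: measurable_xsection; exact: measurable_unlabel_collected.
by rewrite !xsection_collected_in; case: b; rewrite /= ?integral_set0 ?mule0.
Qed.

Let integral_q_pair_xsection A x : measurable A ->
  \int[mu]_(y in xsection A x) (q_pair pip pp pn (x, y))%:E =
  (pip ^+ 2 * pp x)%:E * xsection_integral pp A x
  + ((1 - pip) ^+ 2 * pn x + pip * (1 - pip) * pp x)%:E * xsection_integral pn A x.
Proof.
move=> mA; have [[mpp [pp0 _]] [mpn [pn0 _]]] := (pp_dens, pn_dens).
have mAx := measurable_xsection x mA.
have ge0E (f : X -> R) : (forall y, 0 <= f y)%R -> forall y, xsection A x y -> 0 <= (f y)%:E.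
  by move=> f0 y _; rewrite lee_fin.
have mE (f : X -> R) : measurable_fun setT f -> measurable_fun (xsection A x) (EFin \o f).
  by move=> mf; exact/measurable_funTS/measurable_EFinP.
have ap_ge0 : (0 <= pip ^+ 2 * pp x)%R by rewrite mulr_ge0// sqr_ge0.
have an_ge0 : (0 <= (1 - pip) ^+ 2 * pn x + pip * (1 - pip) * pp x)%R.
  by rewrite addr_ge0// !mulr_ge0// sqr_ge0.
rewrite /xsection_integral -(ge0_integralZl_EFin _ mAx (ge0E _ pp0) (mE _ mpp) ap_ge0).
rewrite -(ge0_integralZl_EFin _ mAx (ge0E _ pn0) (mE _ mpn) an_ge0) -ge0_integralD//.
- by apply: eq_integral => y _; rewrite -!EFinM -EFinD /q_pair /=; congr EFin; ring.
- by move=> y _; rewrite -EFinM lee_fin mulr_ge0.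
- by apply: emeasurable_funM => //; exact: mE.
- by move=> y _; rewrite -EFinM lee_fin mulr_ge0.
- by apply: emeasurable_funM => //; exact: mE.
Qed.

Lemma measure_collected_in A : measurable A ->
  (P \x P) (collected_in A) = \int[mu \x mu]_(z in A) (q_pair pip pp pn z)%:E.
Proof.
move=> mA; have [[mpp [pp0 _]] [mpn [pn0 _]]] := (pp_dens, pn_dens).
pose smu := sigma_finite_measure_of mu_sfin.
have mPS := measurable_fun_xsection P (measurable_unlabel_collected mA).
have mPSb b : measurable_fun setT (fun x => P (xsection (collected_in A) (x, b))).
  exact: measurableT_comp mPS (pair2_measurable b).
rewrite [LHS]integral_joint_density//.
rewrite -ge0_integralD//; last 4 first.
- by move=> x _; rewrite mule_ge0// lee_fin mulr_ge0.
- by apply: emeasurable_funM; [exact: mPSb|apply/measurable_EFinP; exact: measurable_funM].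
- by move=> x _; rewrite mule_ge0// lee_fin mulr_ge0.
- by apply: emeasurable_funM; [exact: mPSb|apply/measurable_EFinP; exact: measurable_funM].
rewrite (fubini_tonelli1_in smu smu)//; last 2 first.
- by apply/measurable_EFinP; exact: measurable_q_pair.
- by move=> z; rewrite lee_fin q_pair_ge0.
apply: eq_integral => x _; rewrite /= !P_xsection_collected_in// integral_q_pair_xsection//.
rewrite -(fineK (xsection_integral_fin_num x pp_dens mA)).
rewrite -(fineK (xsection_integral_fin_num x pn_dens mA)).
by rewrite add0e -!EFinM -!EFinD; congr EFin; ring.
Qed.

Lemma measure_collected :
  (P \x P) collected = (pip ^+ 2 + (1 - pip) ^+ 2 + pip * (1 - pip))%:E.
Proof.
have [[_ [_ pp1]] [_ [_ pn1]]] := (pp_dens, pn_dens).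
have label_set (b b' : bool) :
    [set x : X | ([set: X] `*` [set b]) (x, b')] = if b' == b then setT else set0.
  by apply/seteqP; split => x; case: b; case: b' => //= -[].
have P_label (b : bool) : P ([set: X] `*` [set b]) = (if b then pip else 1 - pip)%:E.
  rewrite P_dens; last exact: measurableX.
  by rewrite !label_set; case: b; rewrite /= integral_set0 ?pp1 ?pn1 mule0 ?add0e ?adde0 mule1.
transitivity (1 - (P \x P) (([set: X] `*` [set false]) `*` ([set: X] `*` [set true]))).
  by rewrite collectedE probability_setC//; apply: measurableX; apply: measurableX.
rewrite product_measure1E; try exact: measurableX.
have -> : P ([set: X] `*` [set false]) * P ([set: X] `*` [set true]) = ((1 - pip) * pip)%:E.
  by rewrite !P_label.
by congr EFin; ring.
Qed.

End pairwise_comparison.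

Theorem theorem1 (d : measure_display) (X : measurableType d) (R : realType)
  (mu : {measure set X -> \bar R}) (mu_sfin : sigma_finite setT mu)
  (pip : R) (pip_ge0 : 0 <= pip) (pip_le1 : pip <= 1)
  (pp pn : X -> R) (pp_dens : is_density mu pp) (pn_dens : is_density mu pn)
  (P : probability (X * bool)%type R)
  (P_dens : has_joint_density mu pip pp pn P) :
  forall A : set (X * X)%type, measurable A ->
    (cond_prob (P \x P)%E (unlabel @^-1` A) collected)%:E
    = (\int[(mu \x mu)%E]_(z in A) (ptilde pip pp pn z)%:E)%E.
Proof.
move=> A mA.
have num_fin : (P \x P)%E (unlabel @^-1` A `&` collected) \is a fin_num.
  rewrite ge0_fin_numE//; apply: le_lt_trans (ltry 1).
  by apply: probability_le1; exact: measurable_unlabel_collected.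
set c := pip ^+ 2 + (1 - pip) ^+ 2 + pip * (1 - pip).
have c_gt0 : 0 < c by rewrite /c; nra.
rewrite /cond_prob (measure_collected pp_dens pn_dens P_dens) -/c.
pose smu := sigma_finite_measure_of mu_sfin.
change (mu \x mu)%E with (smu \x smu)%E.
under eq_integral do rewrite /ptilde /= -/c EFinM.
have [[mpp [pp0 _]] [mpn [pn0 _]]] := (pp_dens, pn_dens).
rewrite ge0_integralZr//; last 3 first.
- by apply/measurable_funTS/measurable_EFinP; exact: measurable_q_pair.
- by move=> z _; rewrite lee_fin q_pair_ge0.
- by rewrite lee_fin invr_ge0 ltW.
rewrite -(measure_collected_in mu_sfin pip_ge0 pip_le1 pp_dens pn_dens P_dens mA).
by rewrite -(fineK num_fin) /= -EFinM.
Qed.
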